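(* A game tree $T$ is weakly finitely small in $\mathbf{Gmes}$ if and only if $T=\emptyset$.
   Context: A game tree is a set $T\subseteq M^{<\omega}$ (some set $M$) closed under initial segments such that every $t\in T$ has an extension $t^\frown x\in T$ (the empty set is a game tree); $|t|$ is the length and $t\restriction k$ the initial segment of length $k$. A map $f\colon T_1\to T_2$ is chronological if $|f(t)|=|t|$ and $f(t\restriction k)=f(t)\restriction k$ for all $t$ and $k\le|t|$. $\mathbf{Gmes}$ is the category of game trees and chronological maps; $\omega$ is a category via its order. A game tree $T$ is weakly finitely small in $\mathbf{Gmes}$ if for every functor $S\colon\omega\to\mathbf{Gmes}$ with colimit cocone $(q_n\colon S(n)\to L)_{n<\omega}$ in $\mathbf{Gmes}$ and every chronological map $f\colon T\to L$ there are $n<\omega$ and a chronological $\tilde f\colon T\to S(n)$ with $q_n\circ\tilde f=f$. *)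

From mathcomp Require Import all_boot.
Set Implicit Arguments. Unset Strict Implicit. Unset Printing Implicit Defensive.

Record GameTree := {
  gt_M : Type;
  gt_T : seq gt_M -> Prop;
  gt_prefix : forall t k, gt_T t -> gt_T (take k t);
  gt_extend : forall t, gt_T t -> exists x, gt_T (rcons t x)
}.

Definition node (T : GameTree) := {t : seq (gt_M T) | @gt_T T t}.

Definition chronological (T1 T2 : GameTree) (f : node T1 -> node T2) : Prop :=
  (forall t : node T1, size (proj1_sig (f t)) = size (proj1_sig t)) /\
  (forall (t s : node T1) (k : nat), k <= size (proj1_sig t) ->
     proj1_sig s = take k (proj1_sig t) ->
     proj1_sig (f s) = take k (proj1_sig (f t))).

(* A functor S : omega -> Gmes, omega viewed as the category of its order. *)
Record omegaDiagram := {
  dg_obj : nat -> GameTree;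
  dg_map : forall n m, n <= m -> node (dg_obj n) -> node (dg_obj m);
  dg_chrono : forall n m (h : n <= m), chronological (dg_map h);
  dg_id : forall n (h : n <= n) x, dg_map h x = x;
  dg_comp : forall n m p (hnm : n <= m) (hmp : m <= p) (hnp : n <= p) x,
      dg_map hnp x = dg_map hmp (dg_map hnm x)
}.

Definition is_cocone (S : omegaDiagram) (L : GameTree)
    (q : forall n, node (dg_obj S n) -> node L) : Prop :=
  (forall n, chronological (q n)) /\
  (forall n m (h : n <= m) x, q m (@dg_map S n m h x) = q n x).

Definition is_colimit (S : omegaDiagram) (L : GameTree)
    (q : forall n, node (dg_obj S n) -> node L) : Prop :=
  is_cocone q /\
  forall (X : GameTree) (g : forall n, node (dg_obj S n) -> node X),
    is_cocone g ->
    exists u : node L -> node X,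
      chronological u /\ (forall n x, u (q n x) = g n x) /\
      (forall v : node L -> node X, chronological v ->
         (forall n x, v (q n x) = g n x) -> forall y, v y = u y).

Definition weakly_finitely_small (T : GameTree) : Prop :=
  forall (S : omegaDiagram) (L : GameTree)
         (q : forall n, node (dg_obj S n) -> node L),
    is_colimit q ->
    forall f : node T -> node L, chronological f ->
    exists (n : nat) (ft : node T -> node (dg_obj S n)),
      chronological ft /\ forall x, q n (ft x) = f x.

Definition empty_tree (T : GameTree) : Prop := forall t, ~ @gt_T T t.

From mathcomp Require Import all_boot.
Set Implicit Arguments. Unset Strict Implicit. Unset Printing Implicit Defensive.

(* The empty tree is trivially small.  For the converse, let [stage n] be the
   binary game tree of plays that either have length at most [n] or contain a
   [true] among their first [n + 1] moves.  These trees form an increasing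
   chain whose colimit is the full binary tree, every play [t] already lying
   in [stage (size t)].  If [T] has a node, it has nodes of every length, and
   the chronological map sending each node of [T] to the all-[false] play of
   the same length cannot factor through any [stage n]: the play
   [nseq n.+1 false] lies outside it. *)

Lemma gt_node_of_size (T : GameTree) k :
  (exists t, @gt_T T t) -> exists t, @gt_T T t /\ size t = k.
Proof.
move=> [t0 T_t0]; elim: k => [|k [t [T_t <-]]].
  by exists (take 0 t0); split; [apply: gt_prefix | rewrite take0].
have [x T_tx] := gt_extend T_t.
by exists (rcons t x); rewrite size_rcons.
Qed.

Lemma empty_weakly_finitely_small (T : GameTree) :
  empty_tree T -> weakly_finitely_small T.
Proof.
move=> T0 S L q _ f _.
have no_node (x : node T) : False := T0 _ (proj2_sig x).
exists 0, (fun x => False_rect _ (no_node x)).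
by split=> [|x]; [split=> [x|x] | ]; case: (no_node x).
Qed.

Definition in_stage (n : nat) (t : seq bool) : bool :=
  (size t <= n) || has id (take n.+1 t).

Lemma in_stage_take n k t : in_stage n t -> in_stage n (take k t).
Proof.
rewrite /in_stage size_take_min => /orP[short | hit].
  by rewrite (leq_trans (geq_minr _ _) short).
have [le_kn | lt_nk] := leqP k n; first by rewrite (leq_trans (geq_minl _ _) le_kn).
by rewrite take_takel ?hit ?orbT.
Qed.

Lemma in_stage_rcons_true n t : in_stage n t -> in_stage n (rcons t true).
Proof.
rewrite /in_stage size_rcons -cats1.
have [// | le_nt] := ltnP (size t) n.
have [lt_nt | le_tn] := ltnP n (size t); first by rewrite takel_cat.
by rewrite [take _ (_ ++ _)]take_oversize ?size_cat ?addn1 // has_cat orbT.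
Qed.

Lemma in_stage_mono n m t : n <= m -> in_stage n t -> in_stage m t.
Proof.
rewrite /in_stage => le_nm /orP[short | hit].
  by rewrite (leq_trans short le_nm).
by rewrite -(cat_take_drop n.+1 (take m.+1 t)) take_takel // has_cat hit orbT.
Qed.

Lemma in_stage_size t : in_stage (size t) t.
Proof. by rewrite /in_stage leqnn. Qed.

Lemma not_in_stage_falses n : ~~ in_stage n (nseq n.+1 false).
Proof. by rewrite /in_stage size_nseq ltnn take_nseq // has_nseq. Qed.

Definition stage (n : nat) : GameTree :=
  {| gt_M := bool; gt_T := in_stage n;
     gt_prefix := fun t k => @in_stage_take n k t;
     gt_extend := fun t st => ex_intro _ true (in_stage_rcons_true st) |}.

Lemma stage_node_inj n (x y : node (stage n)) : proj1_sig x = proj1_sig y -> x = y.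
Proof. by case: x y => [s sx] [s' sy] /= e; subst s'; rewrite (eq_irrelevance sx sy). Qed.

Definition stage_incl n m (le_nm : n <= m) (x : node (stage n)) : node (stage m) :=
  exist _ (proj1_sig x) (in_stage_mono le_nm (proj2_sig x)).

Definition stage_chain : omegaDiagram.
Proof.
refine {| dg_obj := stage; dg_map := stage_incl |}.
- by move=> n m le_nm; split=> // t s k _ ->.
- by move=> n le_nn x; apply: stage_node_inj.
- by move=> n m p le_nm le_mp le_np x; apply: stage_node_inj.
Defined.

Definition full_tree : GameTree :=
  {| gt_M := bool; gt_T := fun _ => True;
     gt_prefix := fun _ _ _ => I;
     gt_extend := fun _ _ => ex_intro _ true I |}.

Lemma full_node_inj (x y : node full_tree) : proj1_sig x = proj1_sig y -> x = y.
Proof. by case: x y => [s []] [_ []] /= <-. Qed.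

Definition stage_to_full n (x : node (stage n)) : node full_tree :=
  exist _ (proj1_sig x) I.

Lemma stage_to_full_cocone : is_cocone (S := stage_chain) stage_to_full.
Proof.
split=> [n | n m le_nm x]; last exact: full_node_inj.
by split=> // t s k _ /= ->.
Qed.

Section FullTreeColimit.

Variables (X : GameTree) (g : forall n, node (stage n) -> node X).
Hypothesis g_cocone : is_cocone (S := stage_chain) g.

Definition full_node_at (y : node full_tree) : node (stage (size (proj1_sig y))) :=
  exist _ (proj1_sig y) (in_stage_size (proj1_sig y)).

Definition full_lift (y : node full_tree) : node X :=
  g (full_node_at y).

(* Both sides agree after pushing to the common stage [maxn n (size x)]. *)
Lemma full_lift_stage n (x : node (stage n)) : full_lift (stage_to_full x) = g x.
Proof.
have [_ g_compat] := g_cocone.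
rewrite /full_lift; set m := maxn n (size (proj1_sig x)).
rewrite -(g_compat _ m (leq_maxr _ _)) -(g_compat _ m (leq_maxl _ _)).
by congr (g _); apply: stage_node_inj.
Qed.

Lemma full_lift_chronological : chronological full_lift.
Proof.
have [g_chrono g_compat] := g_cocone.
split=> [t | t s k le_kt s_eq]; first by rewrite /full_lift (proj1 (g_chrono _)).
have le_st : size (proj1_sig s) <= size (proj1_sig t).
  by rewrite s_eq size_take_min geq_minr.
by rewrite /full_lift -(g_compat _ _ le_st); apply: (proj2 (g_chrono _)).
Qed.

Lemma full_lift_unique (v : node full_tree -> node X) :
  (forall n (x : node (stage n)), v (stage_to_full x) = g x) ->
  forall y, v y = full_lift y.
Proof.
move=> v_factors y.
by rewrite /full_lift -v_factors; congr v; apply: full_node_inj.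
Qed.

End FullTreeColimit.

Lemma stage_to_full_colimit : is_colimit (S := stage_chain) stage_to_full.
Proof.
split=> [|X g g_cocone]; first exact: stage_to_full_cocone.
exists (full_lift g); split; first exact: full_lift_chronological.
split=> [n x | v _ v_factors]; first exact: full_lift_stage.
exact: full_lift_unique.
Qed.

Definition falses_of (T : GameTree) (x : node T) : node full_tree :=
  exist _ (nseq (size (proj1_sig x)) false) I.

Lemma falses_of_chronological (T : GameTree) : chronological (@falses_of T).
Proof.
split=> [x | x s k le_kx s_eq] /=; first by rewrite size_nseq.
by rewrite s_eq size_takel // take_nseq.
Qed.

Lemma weakly_finitely_small_empty (T : GameTree) :
  weakly_finitely_small T -> empty_tree T.
Proof.
move=> T_small t T_t.
have [n [ft [_ ft_factors]]] := T_small _ _ _ stage_to_full_colimit _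
  (falses_of_chronological T).
have [s [T_s size_s]] := gt_node_of_size n.+1 (ex_intro _ t T_t).
have /(f_equal (@proj1_sig _ _)) /= ft_s := ft_factors (exist _ s T_s).
have := proj2_sig (ft (exist _ s T_s)).
by rewrite /= ft_s size_s (negbTE (not_in_stage_falses n)).
Qed.

Theorem mainTheorem10 (T : GameTree) :
  weakly_finitely_small T <-> empty_tree T.
Proof.
split; [exact: weakly_finitely_small_empty | exact: empty_weakly_finitely_small].
Qed.
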